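(* Consider a sequence of samples indexed by $N$ of units $i=1,\dots,N$ observed at times $t=-L,\dots,0,1$ with binary treatment $A_i$ applied at $t=1$, where potential outcomes satisfy $Y_{it}(0)-Y_{i,t-1}(0)=\delta_t+\epsilon_{it,0}$ and $Y_{it}(1)-Y_{it}(0)=\mathbb{I}(t=1)(\psi+\epsilon_{it,1})$, with $\psi_i=\psi+\epsilon_{i1,1}$. Assume $Y_{it}=\mathbb{I}(t=1)A_iY_{it}(1)+(1-\mathbb{I}(t=1)A_i)Y_{it}(0)$; $N^{-1}\sum_{i=1}^N\epsilon_{it,a}\to 0$ almost surely for $a=0,1$; $N^{-1}\sum_iA_i\to p\in(0,1)$ almost surely; $1\le\sum_iA_i\le N-1$; and $|\epsilon_{it,a}|\le\zeta$ for all $i,t,a$. Let $\hat\psi_i^{DiD}$ be the unit-level difference-in-differences estimator ($Y_{i1}-Y_{i0}-[\sum_j(1-A_j)]^{-1}\sum_j(1-A_j)(Y_{j1}-Y_{j0})$ for treated $i$, and $Y_{i0}+[\sum_jA_j]^{-1}\sum_jA_j(Y_{j1}-Y_{j0})-Y_{i1}$ for untreated $i$), and $\tilde\tau_i=\{\tau\ge 0:\psi_i\in[\hat\psi_i^{DiD}-\tau,\hat\psi_i^{DiD}+\tau]\}$. (i) If in addition $[\sum_iA_i]^{-1}\sum_iA_i\epsilon_{i1,0}\to 0$ almost surely as $N\to\infty$, then there is a sequence $r_N\to 0$ almost surely such that for every treated unit $i$, every $q_0\ge\zeta+r_N$ lies in $\tilde\tau_i$. (ii) If in addition both $[\sum_iA_i]^{-1}\sum_iA_i\epsilon_{i1,0}\to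 0$ and $[\sum_iA_i]^{-1}\sum_iA_i\epsilon_{i1,1}\to 0$ almost surely, then there is a sequence $r_N\to 0$ almost surely such that for every untreated unit $i$, every $q_1\ge 2\zeta+r_N$ lies in $\tilde\tau_i$. *)

From HB Require Import structures.
From mathcomp Require Import all_boot all_order all_algebra.
From mathcomp Require Import all_classical all_reals all_analysis.
Set Implicit Arguments. Unset Strict Implicit. Unset Printing Implicit Defensive.
Import Order.TTheory GRing.Theory Num.Theory.
Local Open Scope ring_scope.

Section DiD.
Variable R : realType.

Definition obsY (A : nat -> bool) (Y0 Y1 : nat -> int -> R) (i : nat) (t : int) : R :=
  ((t == 1) && A i)%:R * Y1 i t + (1 - ((t == 1) && A i)%:R) * Y0 i t.

Definition psi_did (N : nat) (A : nat -> bool) (Y : nat -> int -> R) (i : nat) : R :=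
  if A i then
    Y i 1 - Y i 0
    - (\sum_(j < N) (1 - (A j)%:R))^-1 * \sum_(j < N) (1 - (A j)%:R) * (Y j 1 - Y j 0)
  else
    Y i 0 + (\sum_(j < N) (A j)%:R)^-1 * \sum_(j < N) (A j)%:R * (Y j 1 - Y j 0) - Y i 1.

Definition tau_tilde (psi_i psihat : R) : set R :=
  [set tau | 0 <= tau /\ psihat - tau <= psi_i <= psihat + tau].

End DiD.

From HB Require Import structures.
From mathcomp Require Import all_boot all_order all_algebra.
From mathcomp Require Import all_classical all_reals all_analysis.
From mathcomp Require Import zify ring lra.
Import Order.TTheory GRing.Theory Num.Theory.
Import numFieldNormedType.Exports.
Local Open Scope classical_set_scope.
Local Open Scope ring_scope.
Set Implicit Arguments. Unset Strict Implicit. Unset Printing Implicit Defensive.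

(* In the model, Y_i1 - Y_i0 = delta_1 + eps_{i1,0} + A_i (psi + eps_{i1,1}).  Hence the
   DiD estimate of a treated unit is psi_i + eps_{i1,0} minus the control-group mean of
   eps_{.1,0}, and that of a control unit is psi_i - eps_{i1,0} - eps_{i1,1} plus the
   treated-group means of eps_{.1,0} and eps_{.1,1}.  The unit's own errors cost at most
   zeta each, and r_N is the norm of the group means.  Treated-group means vanish by
   assumption; the control-group mean equals (1 - k/N)^-1 (overall mean - (k/N) treated
   mean) with k the number of treated units, and vanishes because k/N -> p < 1. *)

Section WeightedMean.
Variable R : fieldType.

Definition wmean n (w f : 'I_n -> R) : R :=
  (\sum_(j < n) w j)^-1 * \sum_(j < n) w j * f j.

Lemma eq_wmean n (w f g : 'I_n -> R) :
  (forall j, w j != 0 -> f j = g j) -> wmean w f = wmean w g.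
Proof.
move=> efg; congr (_ * _); apply: eq_bigr => j _.
by have [->|/efg ->] := eqVneq (w j) 0; rewrite ?mul0r.
Qed.

Lemma wmeanD n (w f g : 'I_n -> R) :
  wmean w (fun j => f j + g j) = wmean w f + wmean w g.
Proof.
by rewrite /wmean -mulrDr -big_split; congr (_ * _); apply: eq_bigr => j _; rewrite mulrDr.
Qed.

Lemma wmean_addl n (w f : 'I_n -> R) (c : R) : \sum_(j < n) w j != 0 ->
  wmean w (fun j => c + f j) = c + wmean w f.
Proof.
move=> w_neq0; rewrite wmeanD; congr (_ + _).
by rewrite /wmean -mulr_suml mulrA mulVf // mul1r.
Qed.

End WeightedMean.

Lemma sum_complement_weights (R : ringType) n (a : 'I_n -> bool) :
  \sum_(j < n) (1 - (a j)%:R) = n%:R - (\sum_(j < n) a j)%:R :> R.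
Proof. by rewrite sumrB sumr_const card_ord natr_sum. Qed.

Lemma wmean_complement (R : numFieldType) n (a : 'I_n -> bool) (f : 'I_n -> R) :
  (0 < \sum_(j < n) a j < n)%N ->
  wmean (fun j => 1 - (a j)%:R) f =
  (1 - n%:R^-1 * \sum_(j < n) (a j)%:R)^-1 *
  (n%:R^-1 * \sum_(j < n) f j
   - (n%:R^-1 * \sum_(j < n) (a j)%:R) * wmean (fun j => (a j)%:R) f).
Proof.
move=> /andP[k_gt0 k_ltn]; rewrite /wmean.
have -> : \sum_(j < n) (1 - (a j)%:R) * f j =
    \sum_(j < n) f j - \sum_(j < n) (a j)%:R * f j.
  by rewrite -sumrB; apply: eq_bigr => j _; rewrite mulrBl mul1r.
rewrite sum_complement_weights -natr_sum.
set k := (\sum_(j < n) a j)%N.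
have k_neq0 : k%:R != 0 :> R by rewrite pnatr_eq0 -lt0n.
have n_neq0 : n%:R != 0 :> R by rewrite pnatr_eq0; lia.
have nk_neq0 : n%:R - k%:R != 0 :> R by rewrite subr_eq0 eqr_nat; lia.
by field; rewrite nk_neq0 k_neq0 n_neq0.
Qed.

Lemma cvg_wmean_complement (R : numFieldType) (a : nat -> nat -> bool)
    (e : nat -> nat -> R) (p : R) :
  p != 1 ->
  (\forall N \near \oo, (0 < \sum_(j < N) a N j < N)%N) ->
  (fun N => N%:R^-1 * \sum_(j < N) (a N j)%:R) @ \oo --> p ->
  (fun N => N%:R^-1 * \sum_(j < N) e N j) @ \oo --> 0 ->
  (fun N => wmean (fun j : 'I_N => (a N j)%:R) (fun j => e N j)) @ \oo --> 0 ->
  (fun N => wmean (fun j : 'I_N => 1 - (a N j)%:R) (fun j => e N j)) @ \oo --> 0.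
Proof.
move=> p_neq1 a_mixed a_share e_mean e_wmean.
have : (fun N => (1 - N%:R^-1 * \sum_(j < N) (a N j)%:R)^-1 *
    (N%:R^-1 * \sum_(j < N) e N j
     - (N%:R^-1 * \sum_(j < N) (a N j)%:R) *
       wmean (fun j : 'I_N => (a N j)%:R) (fun j => e N j)))
    @ \oo --> (1 - p)^-1 * (0 - p * 0).
  apply: cvgM; last by apply: cvgB => //; exact: cvgM.
  by apply: cvgV; [rewrite subr_eq0 eq_sym | exact: cvgB (cvg_cst _) a_share].
rewrite mulr0 subrr mulr0; apply: cvg_trans; apply: near_eq_cvg.
by apply: filterS a_mixed => N /wmean_complement ->.
Qed.

Lemma tau_tildeE (R : realType) (psi_i psihat : R) :
  tau_tilde psi_i psihat = [set tau | `|psihat - psi_i| <= tau].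
Proof.
apply/seteqP; split=> tau /=; first by case=> _; rewrite ler_distlC.
by move=> dist_le; split; [exact: le_trans dist_le | rewrite -ler_distlC].
Qed.

Lemma psi_didE (R : realType) N (A : nat -> bool) (Y : nat -> int -> R) i :
  psi_did N A Y i =
  if A i then Y i 1 - Y i 0 - wmean (fun j : 'I_N => 1 - (A j)%:R) (fun j => Y j 1 - Y j 0)
  else Y i 0 + wmean (fun j : 'I_N => (A j)%:R) (fun j => Y j 1 - Y j 0) - Y i 1.
Proof. by []. Qed.

Section DiDModel.
Variables (R : realType) (N : nat) (A : nat -> bool) (Y0 Y1 : nat -> int -> R).
Variables (e0 e1 : nat -> R) (delta1 psi : R).
Hypothesis trend0 : forall i, (i < N)%N -> Y0 i 1 - Y0 i 0 = delta1 + e0 i.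
Hypothesis effect1 : forall i, (i < N)%N -> Y1 i 1 - Y0 i 1 = psi + e1 i.

Let Y := obsY A Y0 Y1.

Lemma obsY_diff_treated i : (i < N)%N -> A i ->
  Y i 1 - Y i 0 = delta1 + (psi + (e0 i + e1 i)).
Proof.
move=> iN Ai; have := trend0 iN; have := effect1 iN.
rewrite /Y /obsY Ai /= !mul0r !mul1r subrr subr0 mul0r !add0r; lra.
Qed.

Lemma obsY_diff_control i : (i < N)%N -> ~~ A i -> Y i 1 - Y i 0 = delta1 + e0 i.
Proof.
by move=> iN /negbTE Ai; rewrite /Y /obsY Ai /= !mul0r !subr0 !mul1r !add0r trend0.
Qed.

Lemma psi_did_treated i : (i < N)%N -> A i -> (\sum_(j < N) A j < N)%N ->
  psi_did N A Y i = psi + e1 i + e0 i - wmean (fun j : 'I_N => 1 - (A j)%:R) (fun j => e0 j).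
Proof.
move=> iN Ai has_control; rewrite psi_didE Ai obsY_diff_treated //.
have sum_neq0 : \sum_(j < N) (1 - (A j)%:R) != 0 :> R.
  by rewrite sum_complement_weights subr_eq0 eqr_nat gtn_eqF.
rewrite (@eq_wmean _ N _ _ (fun j => delta1 + e0 j)) => [|j].
  by rewrite wmean_addl //; lra.
case Aj: (A j); first by rewrite subrr eqxx.
by move=> _; rewrite obsY_diff_control ?Aj.
Qed.

Lemma psi_did_control i : (i < N)%N -> ~~ A i -> (0 < \sum_(j < N) A j)%N ->
  psi_did N A Y i = psi - e0 i + wmean (fun j : 'I_N => (A j)%:R) (fun j => e0 j)
                    + wmean (fun j : 'I_N => (A j)%:R) (fun j => e1 j).
Proof.
move=> iN /negbTE Ai has_treated; rewrite psi_didE Ai.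
have sum_neq0 : \sum_(j < N) (A j)%:R != 0 :> R by rewrite -natr_sum pnatr_eq0 -lt0n.
rewrite (@eq_wmean _ N _ _ (fun j => delta1 + (psi + (e0 j + e1 j)))).
  rewrite !wmean_addl // wmeanD; have := obsY_diff_control iN; rewrite Ai; lra.
move=> j; case Aj: (A j); last by rewrite eqxx.
by move=> _; rewrite obsY_diff_treated ?Aj.
Qed.

Lemma psi_did_treated_dist i : (i < N)%N -> A i -> (\sum_(j < N) A j < N)%N ->
  `|psi_did N A Y i - (psi + e1 i)|
    <= `|e0 i| + `|wmean (fun j : 'I_N => 1 - (A j)%:R) (fun j => e0 j)|.
Proof.
move=> iN Ai has_control; rewrite psi_did_treated //.
set m := wmean _ _; rewrite (_ : _ - _ = e0 i - m); last by ring.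
exact: ler_normB.
Qed.

Lemma psi_did_control_dist i : (i < N)%N -> ~~ A i -> (0 < \sum_(j < N) A j)%N ->
  `|psi_did N A Y i - (psi + e1 i)|
    <= `|e0 i| + `|e1 i| + (`|wmean (fun j : 'I_N => (A j)%:R) (fun j => e0 j)|
                          + `|wmean (fun j : 'I_N => (A j)%:R) (fun j => e1 j)|).
Proof.
move=> iN Ai has_treated; rewrite psi_did_control //.
set m0 := wmean _ (fun j => e0 j); set m1 := wmean _ (fun j => e1 j).
rewrite (_ : _ - _ = (m0 - e0 i) + (m1 - e1 i)); last by ring.
apply: le_trans (ler_normD _ _) _.
by have := ler_normB m0 (e0 i); have := ler_normB m1 (e1 i); lra.
Qed.

End DiDModel.

Theorem corollary1 (d : measure_display) (T : measurableType d) (R : realType)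
  (P : probability T R) (L : nat)
  (A : nat -> nat -> T -> bool)
  (Y0 Y1 : nat -> nat -> int -> T -> R)
  (eps0 eps1 : nat -> nat -> int -> T -> R)
  (delta : int -> R) (psi p zeta : R)
  (Hpo0 : forall (N i : nat) (t : int) (w : T), (i < N)%N -> - (L%:Z) < t <= 1 ->
     Y0 N i t w - Y0 N i (t - 1) w = delta t + eps0 N i t w)
  (Hpo1 : forall (N i : nat) (t : int) (w : T), (i < N)%N -> - (L%:Z) <= t <= 1 ->
     Y1 N i t w - Y0 N i t w = (t == 1)%:R * (psi + eps1 N i t w))
  (Heps0 : forall t : int, - (L%:Z) <= t <= 1 ->
     {ae P, forall w, (fun N : nat => N%:R^-1 * \sum_(i < N) eps0 N i t w) @ \oo --> 0})
  (Heps1 : forall t : int, - (L%:Z) <= t <= 1 ->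
     {ae P, forall w, (fun N : nat => N%:R^-1 * \sum_(i < N) eps1 N i t w) @ \oo --> 0})
  (Hp : 0 < p < 1)
  (HA : {ae P, forall w, (fun N : nat => N%:R^-1 * \sum_(i < N) (A N i w)%:R : R) @ \oo --> p})
  (Hbal : forall N w, (2 <= N)%N ->
     (1 <= \sum_(i < N) nat_of_bool (A N i w) <= N - 1)%N)
  (Hbd : forall (N i : nat) (t : int) (w : T), (i < N)%N -> - (L%:Z) <= t <= 1 ->
     `|eps0 N i t w| <= zeta /\ `|eps1 N i t w| <= zeta) :
  let Y N w := obsY (A N ^~ w) (fun i t => Y0 N i t w) (fun i t => Y1 N i t w) in
  let psi_i N i w := psi + eps1 N i 1 w in
  let psihat N i w := psi_did N (A N ^~ w) (Y N w) i in
  (* (i) treated units *)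
  ({ae P, forall w, (fun N : nat => (\sum_(i < N) (A N i w)%:R : R)^-1 *
        \sum_(i < N) (A N i w)%:R * eps0 N i 1 w) @ \oo --> 0} ->
   exists r : nat -> T -> R,
     {ae P, forall w, (fun N : nat => r N w) @ \oo --> 0} /\
     forall N w, (2 <= N)%N -> forall i, (i < N)%N -> A N i w ->
       forall q0, zeta + r N w <= q0 -> tau_tilde (psi_i N i w) (psihat N i w) q0)
  /\
  (* (ii) untreated units *)
  ({ae P, forall w, (fun N : nat => (\sum_(i < N) (A N i w)%:R : R)^-1 *
        \sum_(i < N) (A N i w)%:R * eps0 N i 1 w) @ \oo --> 0} ->
   {ae P, forall w, (fun N : nat => (\sum_(i < N) (A N i w)%:R : R)^-1 *
        \sum_(i < N) (A N i w)%:R * eps1 N i 1 w) @ \oo --> 0} ->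
   exists r : nat -> T -> R,
     {ae P, forall w, (fun N : nat => r N w) @ \oo --> 0} /\
     forall N w, (2 <= N)%N -> forall i, (i < N)%N -> ~~ A N i w ->
       forall q1, 2 * zeta + r N w <= q1 -> tau_tilde (psi_i N i w) (psihat N i w) q1).
Proof.
move=> Y psi_i psihat.
have t1_range : - (L%:Z) <= (1 : int) <= 1 by lia.
have trend0 N w i : (i < N)%N -> Y0 N i 1 w - Y0 N i 0 w = delta 1 + eps0 N i 1 w.
  by move=> iN; rewrite -[0]/(1 - 1 : int) Hpo0 //; lia.
have effect1 N w i : (i < N)%N -> Y1 N i 1 w - Y0 N i 1 w = psi + eps1 N i 1 w.
  by move=> iN; rewrite Hpo1 // eqxx mul1r.
have mixed w : \forall N \near \oo, (0 < \sum_(j < N) A N j w < N)%N.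
  by exists 2%N => // N N2; have := Hbal N w N2; lia.
split.
- move=> treated_mean0.
  exists (fun N w => `|wmean (fun j : 'I_N => 1 - (A N j w)%:R) (fun j => eps0 N j 1 w)|).
  split.
    apply: filterS3 HA (Heps0 1 t1_range) treated_mean0 => w share mean0 tmean0.
    rewrite -(normr0 R); apply: cvg_norm; apply: (cvg_wmean_complement (a := fun N j => A N j w)
        (e := fun N j => eps0 N j 1 w)) share mean0 tmean0.
      by rewrite lt_eqF //; case/andP: Hp.
    exact: mixed.
  move=> N w N2 i iN Ai q0 q0_ge; rewrite tau_tildeE /=.
  apply: le_trans (psi_did_treated_dist (trend0 N w) (effect1 N w) iN Ai _) _.
    by have := Hbal N w N2; lia.
  by have [eps0_le _] := Hbd N i 1 w iN t1_range; lra.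
- move=> treated_mean0 treated_mean1.
  exists (fun N w => `|wmean (fun j : 'I_N => (A N j w)%:R) (fun j => eps0 N j 1 w)|
                     + `|wmean (fun j : 'I_N => (A N j w)%:R) (fun j => eps1 N j 1 w)|).
  split.
    apply: filterS2 treated_mean0 treated_mean1 => w tmean0 tmean1.
    by rewrite -[0](addr0 0) -{1 2}(normr0 R); apply: cvgD; apply: cvg_norm.
  move=> N w N2 i iN Ai q1 q1_ge; rewrite tau_tildeE /=.
  apply: le_trans (psi_did_control_dist (trend0 N w) (effect1 N w) iN Ai _) _.
    by have := Hbal N w N2; lia.
  by have [eps0_le eps1_le] := Hbd N i 1 w iN t1_range; lra.
Qed.
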